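(* Let $n$ be a natural number and let $P\subseteq S_n$ be a subset of the symmetric group with $|P|=6$ such that for all $I,J\subseteq[n]$ the set $\{\pi\in P\mid \pi(I)=J\}$ has cardinality $0$ or at least $2$, and has cardinality $0$ or exactly $2$ if $|I|=|J|=1$. Then $n=3$ and $P=S_3$. *)

From mathcomp Require Export all_boot all_fingroup.
Set Implicit Arguments.
Unset Strict Implicit.
Unset Printing Implicit Defensive.

Definition nmaps (n : nat) (P : {set 'S_n}) (I J : {set 'I_n}) : nat :=
  #|[set s in P | (fun x => s x) @: I == J]|.

Set Implicit Arguments.
Unset Strict Implicit.
Unset Printing Implicit Defensive.

(* Counting fibres, the hypothesis on singletons says that at every point x the
   permutations of P take exactly three values, each twice, so every pi in P has
   a unique x-partner in P agreeing with pi at x.  The hypothesis on pairs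
   {x, e} shows that pi e is a value at x whenever the x-partner of pi differs
   from pi at e.  Pick a, c such that the a-partner of pi moves c; then the
   values at a and at c are the same three points, and every point e is among
   them, since otherwise the a- and c-partners would both be the e-partner.
   Hence n = 3, and P = S_3 because both have six elements. *)

Lemma card_uniform_fibers (T U : finType) (f : T -> U) (A : {set T}) k :
  (forall t, t \in A -> #|[set u in A | f u == f t]| = k) ->
  #|A| = k * #|f @: A|.
Proof.
move=> fibk; rewrite -sum1_card (partition_big f (mem (f @: A))) /=; last first.
  by move=> t tA; apply: imset_f.
rewrite mulnC -sum_nat_const; apply: eq_bigr => _ /imsetP[t tA ->].
by rewrite -(fibk t tA) sum1_card; apply: eq_card => u; rewrite inE.
Qed.

Lemma cards3 (T : finType) (u v w : T) :
  u != v -> u != w -> v != w -> #|[set u; v; w]| = 3.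
Proof. by move=> uv uw vw; rewrite -setUA cardsU1 cards2 !inE negb_or uv uw vw. Qed.

Lemma perm_neq_at (T : finType) (s t : {perm T}) : s != t -> exists x, s x != t x.
Proof.
move=> st; apply/existsP; apply: contraNT st; rewrite negb_exists => /forallP eqst.
by apply/eqP/permP => x; apply/eqP; rewrite -[_ == _]negbK.
Qed.

Definition fiber n (P : {set 'S_n}) (x j : 'I_n) := [set s in P | s x == j].

Definition vals n (P : {set 'S_n}) (x : 'I_n) := [set s x | s : 'S_n in P].

Definition partner n (P : {set 'S_n}) (x : 'I_n) (pi : 'S_n) :=
  odflt pi [pick s in fiber P x (pi x) :\ pi].

Lemma mem_vals n (P : {set 'S_n}) x s : s \in P -> s x \in vals P x.
Proof. by move=> sP; apply/imsetP; exists s. Qed.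

Lemma nmaps1 n (P : {set 'S_n}) x j : nmaps P [set x] [set j] = #|fiber P x j|.
Proof.
by apply: eq_card => s; rewrite !inE imset_set1 (inj_eq set1_inj).
Qed.

Section SixPermutations.

Variables (n : nat) (P : {set 'S_n}).
Hypothesis cardP : #|P| = 6.
Hypothesis nmaps_pair : forall I J : {set 'I_n}, nmaps P I J = 0 \/ 2 <= nmaps P I J.
Hypothesis nmaps_point : forall I J : {set 'I_n}, #|I| = 1 -> #|J| = 1 ->
  nmaps P I J = 0 \/ nmaps P I J = 2.

Lemma card_fiber x pi : pi \in P -> #|fiber P x (pi x)| = 2.
Proof.
move=> piP; have piF : pi \in fiber P x (pi x) by rewrite inE piP eqxx.
rewrite -nmaps1; case: (nmaps_point (cards1 x) (cards1 (pi x))) => // /eqP.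
by rewrite nmaps1 cards_eq0 => /eqP fib0; rewrite fib0 inE in piF.
Qed.

Lemma card_vals x : #|vals P x| = 3.
Proof.
have := card_uniform_fibers (f := fun s : 'S_n => s x) (card_fiber x).
by rewrite cardP -[6]/(2 * 3) => /eqP; rewrite eqn_pmul2l // => /eqP.
Qed.

Lemma fiberD1_partner x pi :
  pi \in P -> fiber P x (pi x) :\ pi = [set partner P x pi].
Proof.
move=> piP; have := cardsD1 pi (fiber P x (pi x)).
rewrite card_fiber // inE piP eqxx add1n => -[/esym/eqP/cards1P[s fibs]].
by rewrite /partner fibs; case: pickP => [t /set1P -> | /(_ s)]; rewrite ?inE ?eqxx.
Qed.

Lemma partnerP x pi t : pi \in P ->
  reflect [/\ t \in P, t != pi & t x = pi x] (t == partner P x pi).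
Proof.
move=> piP; move/setP/(_ t): (fiberD1_partner x piP); rewrite !inE => <-.
by apply: (iffP and3P) => -[-> -> /eqP ->].
Qed.

Lemma partner_spec x pi : pi \in P ->
  [/\ partner P x pi \in P, partner P x pi != pi & partner P x pi x = pi x].
Proof. by move=> piP; apply/(partnerP x _ piP). Qed.

Lemma partner_disagree_neq a c pi :
  pi \in P -> partner P a pi c != pi c -> a != c.
Proof.
by move=> piP; apply: contraNneq => <-; have [_ _ ->] := partner_spec a piP.
Qed.

(* A second permutation mapping {x, e} onto {pi x, pi e} cannot agree with pi
   at x, since it would then be the x-partner; so it sends x to pi e. *)
Lemma vals_disagree x e pi :
  pi \in P -> partner P x pi e != pi e -> pi e \in vals P x.
Proof.
move=> piP se; have xe := partner_disagree_neq piP se.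
set S := [set t in P | (fun y => t y) @: [set x; e] == [set pi x; pi e]].
have piS : pi \in S by rewrite inE piP imsetU1 imset_set1 eqxx.
have : 0 < #|S :\ pi|.
  have [S0 | S2] := nmaps_pair [set x; e] [set pi x; pi e].
    by move/eqP: S0; rewrite /nmaps -/S cards_eq0 => /eqP S0; rewrite S0 inE in piS.
  by move: S2; rewrite /nmaps -/S (cardsD1 pi) piS.
case/card_gt0P => t; rewrite !inE imsetU1 imset_set1 => /and3P[tpi tP /eqP tS].
have /set2P[tx | tx] : t x \in [set pi x; pi e] by rewrite -tS !inE eqxx.
  have /set2P[te | te] : t e \in [set pi x; pi e] by rewrite -tS !inE eqxx orbT.
    by move: xe; rewrite -(inj_eq (@perm_inj _ t)) tx te eqxx.
  have /eqP tsx : t == partner P x pi by apply/partnerP.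
  by rewrite -tsx te eqxx in se.
by rewrite -tx mem_vals.
Qed.

Lemma vals_eq x (A : {set 'I_n}) : A \subset vals P x -> 3 <= #|A| -> vals P x = A.
Proof. by move=> sub3 A3; apply/esym/eqP; rewrite eqEcard sub3 card_vals. Qed.

Lemma partner_sym a c pi :
  pi \in P -> partner P a pi c != pi c -> partner P c pi a != pi a.
Proof.
move=> piP; apply: contra_neq => sca; have [scP scpi scc] := partner_spec c piP.
by have /eqP <- : partner P c pi == partner P a pi by apply/partnerP.
Qed.

Lemma vals_partner a c pi : pi \in P -> partner P a pi c != pi c ->
  vals P a = [set pi a; pi c; partner P c pi a].
Proof.
move=> piP sac; have sca := partner_sym piP sac.
have [scP _ scc] := partner_spec c piP.
have ac := partner_disagree_neq piP sac.
apply: vals_eq; last first.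
  rewrite cards3 // ?(inj_eq perm_inj) // 1?eq_sym //.
  by rewrite -scc (inj_eq perm_inj).
by rewrite !subUset !sub1set (vals_disagree piP sac) !mem_vals.
Qed.

Lemma partner_cross a c pi : pi \in P -> partner P a pi c != pi c ->
  partner P c pi a = partner P a pi c.
Proof.
move=> piP sac; have sca := partner_sym piP sac.
have [_ _ scc] := partner_spec c piP.
set d := (pi^-1)%g (partner P c pi a).
have pid : pi d = partner P c pi a by rewrite permKV.
have scd : partner P c pi d != pi d.
  by rewrite pid (inj_eq perm_inj) -(inj_eq (@perm_inj _ pi)) pid.
have := vals_disagree piP scd; rewrite (vals_partner piP sca) pid -setUA !inE.
case/or3P => /eqP // scac; last by rewrite scac eqxx in sca.
move: (partner_disagree_neq piP sac).
by rewrite -(inj_eq (@perm_inj _ (partner P c pi))) scac scc eqxx.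
Qed.

Lemma vals_partner_sym a c pi : pi \in P -> partner P a pi c != pi c ->
  vals P c = vals P a.
Proof.
move=> piP sac; have sca := partner_sym piP sac.
rewrite (vals_partner piP sca) (vals_partner piP sac) partner_cross //.
by congr (_ :|: _); apply: setUC.
Qed.

Lemma vals_setT a c pi : pi \in P -> partner P a pi c != pi c -> vals P a = setT.
Proof.
move=> piP sac; apply/setP => y; rewrite inE -(permKV pi y).
set e := (pi^-1)%g y.
have [sae | /(vals_disagree piP) //] := eqVneq (partner P a pi e) (pi e).
have [sce | /(vals_disagree piP)] := eqVneq (partner P c pi e) (pi e); last first.
  by rewrite (vals_partner_sym piP sac).
have [saP sapi _] := partner_spec a piP; have [scP scpi scc] := partner_spec c piP.
have /eqP sa_e : partner P a pi == partner P e pi by apply/partnerP.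
have /eqP sc_e : partner P c pi == partner P e pi by apply/partnerP.
by rewrite sa_e -sc_e scc eqxx in sac.
Qed.

Lemma exists_partner_disagree :
  exists pi a c, pi \in P /\ partner P a pi c != pi c.
Proof.
have [pi piP] : exists pi, pi \in P by apply/card_gt0P; rewrite cardP.
have [s /setD1P[spi _]] : exists s, s \in P :\ pi.
  by apply/card_gt0P; move: (cardsD1 pi P); rewrite cardP piP add1n => -[<-].
have [a _] := perm_neq_at spi; have [_ sapi _] := partner_spec a piP.
by have [c sac] := perm_neq_at sapi; exists pi, a, c.
Qed.

End SixPermutations.

Theorem lemma3p4 (n : nat) (P : {set 'S_n}) :
  #|P| = 6 ->
  (forall I J : {set 'I_n}, nmaps P I J = 0 \/ 2 <= nmaps P I J) ->
  (forall I J : {set 'I_n}, #|I| = 1 -> #|J| = 1 ->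
     nmaps P I J = 0 \/ nmaps P I J = 2) ->
  n = 3 /\ P = [set: 'S_n].
Proof.
move=> cardP nmaps_pair nmaps_point.
have [pi [a [c [piP sac]]]] := exists_partner_disagree cardP nmaps_point.
have n3 : n = 3.
  rewrite -(card_ord n) -cardsT -(vals_setT cardP nmaps_pair nmaps_point piP sac).
  exact: card_vals.
split=> //; subst n.
by apply/eqP; rewrite eqEcard subsetT cardsT card_Sn cardP.
Qed.
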